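(* Let $(X,G)$ be a dislocation space with $X$ a reflexive Banach space, and let $(u_n)$ be a bounded sequence in $X$. Suppose that sequences $(g^{(1)}_n),(g^{(2)}_n)\subset G$ and $w^{(1)},w^{(2)}\in X$ satisfy $(g^{(1)}_n)^{-1}u_n\to w^{(1)}$ weakly in $X$ and $(g^{(2)}_n)^{-1}(u_n-g^{(1)}_nw^{(1)})\to w^{(2)}$ weakly in $X$, with $w^{(2)}\neq0$. Then $(g^{(1)}_n)^{-1}g^{(2)}_n\rightharpoonup 0$ operator-weakly as $n\to\infty$.
   Context: Dislocation space: a Banach space $X$ with a group $G\subset\mathcal{B}(X)$ (under composition) of bijective linear isometries such that (1) every $(g_n)\subset G$ with $g_n\not\rightharpoonup0$ has an operator-strongly convergent subsequence (limit in $\mathcal{B}(X)$), and (2) for every $(g_n)\subset G$ with $g_n\not\rightharpoonup0$ and every $(u_n)\subset X$ with $u_n\to0$ weakly, there is a subsequence with $g_{n_j}u_{n_j}\to0$ weakly. Here $A_n\rightharpoonup A$ (operator-weakly) means $A_nu\to Au$ weakly for all $u\in X$, and operator-strong convergence means $A_nu\to Au$ in norm for all $u$. *)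

From HB Require Import structures.
From mathcomp Require Import all_boot all_order all_algebra.
From mathcomp Require Import all_classical all_reals all_analysis.
Set Implicit Arguments. Unset Strict Implicit. Unset Printing Implicit Defensive.
Import Order.TTheory GRing.Theory Num.Theory.
Import numFieldNormedType.Exports.
Local Open Scope classical_set_scope.
Local Open Scope ring_scope.

Section Dislocation.
Variables (R : realType) (X : completeNormedModType R).

Definition lin_op (A : X -> X) : Prop :=
  forall (a : R) (x y : X), A (a *: x + y) = a *: A x + A y.

Definition bounded_op (A : X -> X) : Prop :=
  lin_op A /\ exists C : R, forall x, `|A x| <= C * `|x|.

Definition cont_lin_functional (f : X -> R) : Prop :=
  (forall (a : R) (x y : X), f (a *: x + y) = a * f x + f y) /\ continuous f.

Definition weak_cvg (u : nat -> X) (w : X) : Prop :=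
  forall f, cont_lin_functional f -> (fun n => f (u n)) @ \oo --> f w.

Definition op_weak_cvg (A : nat -> X -> X) (B : X -> X) : Prop :=
  forall u, weak_cvg (fun n => A n u) (B u).

Definition op_strong_cvg (A : nat -> X -> X) (B : X -> X) : Prop :=
  forall u, (fun n => A n u) @ \oo --> B u.

(* X is reflexive: every bounded linear functional on X^* (bounded w.r.t. the
   dual norm ||f|| = inf {M >= 0 | forall x, |f x| <= M ||x||}) is evaluation
   at some point of X. *)
Definition reflexive_space : Prop :=
  forall Phi : (X -> R) -> R,
    (forall (a : R) f g, cont_lin_functional f -> cont_lin_functional g ->
       Phi (fun x => a * f x + g x) = a * Phi f + Phi g) ->
    (exists C : R, forall f (M : R), cont_lin_functional f -> 0 <= M ->
       (forall x, `|f x| <= M * `|x|) -> `|Phi f| <= C * M) ->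
    exists x0 : X, forall f, cont_lin_functional f -> Phi f = f x0.

Definition isometry_group (G : set (X -> X)) : Prop :=
  [/\ id \in G,
      (forall g, g \in G -> [/\ lin_op g, forall x, `|g x| = `|x| & bijective g]),
      (forall g h, g \in G -> h \in G -> (g \o h) \in G) &
      (forall g h, g \in G -> cancel g h -> cancel h g -> h \in G)].

Definition subseq_idx (phi : nat -> nat) : Prop :=
  forall m n, (m < n)%N -> (phi m < phi n)%N.

Definition dislocation_space (G : set (X -> X)) : Prop :=
  [/\ isometry_group G,
      (forall g : nat -> X -> X, (forall n, g n \in G) ->
         ~ op_weak_cvg g (fun _ => 0) ->
         exists phi, subseq_idx phi /\
           exists A, bounded_op A /\ op_strong_cvg (fun j => g (phi j)) A) &
      (forall (g : nat -> X -> X) (u : nat -> X), (forall n, g n \in G) ->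
         ~ op_weak_cvg g (fun _ => 0) -> weak_cvg u 0 ->
         exists phi, subseq_idx phi /\
           weak_cvg (fun j => g (phi j) (u (phi j))) 0)].

End Dislocation.

From HB Require Import structures.
From mathcomp Require Import all_boot all_order all_algebra.
From mathcomp Require Import all_classical all_reals all_analysis.
From mathcomp Require Import ring lra.
Set Implicit Arguments. Unset Strict Implicit. Unset Printing Implicit Defensive.
Import Order.TTheory GRing.Theory Num.Theory.
Import numFieldNormedType.Exports.
Local Open Scope classical_set_scope.
Local Open Scope ring_scope.

(* Write K n := (g1 n)^-1 \o g2 n and Ki n := (g2 n)^-1 \o g1 n = (K n)^-1,
   both in G.  Suppose K does not tend operator-weakly to 0.  By the first
   dislocation axiom a subsequence K (phi j) converges operator-strongly to
   some A.  Then Ki (phi j) cannot tend operator-weakly to 0: otherwise every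
   y = Ki (A y) + Ki (K y - A y) would be a weak limit of 0 + o(1), so X = {0}
   and K would trivially tend to 0.  The second axiom, applied to Ki (phi j)
   and the weakly null sequence (g1 n)^-1 u n - w1, gives a further
   subsequence along which Ki (...) = (g2 n)^-1 (u n - g1 n w1) tends weakly
   to 0; since it also tends weakly to w2, uniqueness of weak limits forces
   w2 = 0, a contradiction. *)

Section HahnBanach.
Variables (R : realType) (X : normedModType R) (w : X).

(* Subsets S of X * R serve as partial functionals.  A norming graph is the
   graph of a linear functional on a subspace, dominated by the norm and
   taking the value |w| at w. *)
Definition linear_graph (S : set (X * R)) : Prop := forall (c : R) x a y b,
  S (x, a) -> S (y, b) -> S (c *: x + y, c * a + b).

Definition functional_graph (S : set (X * R)) : Prop :=
  forall x a b, S (x, a) -> S (x, b) -> a = b.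

Definition norm_dominated (S : set (X * R)) : Prop :=
  forall x a, S (x, a) -> a <= `|x|.

Definition norming_graph (S : set (X * R)) : Prop :=
  [/\ S (w, `|w|), linear_graph S, functional_graph S & norm_dominated S].

Lemma norming_graph0 S : norming_graph S -> S (0, 0).
Proof.
case=> Sw Slin _ _; have := Slin (-1) _ _ _ _ Sw Sw.
by rewrite scaleN1r addNr mulN1r addNr.
Qed.

Lemma norming_graphZ S k x a : norming_graph S -> S (x, a) -> S (k *: x, k * a).
Proof.
move=> gS Sx; have [_ Slin _ _] := gS.
by have := Slin k _ _ _ _ Sx (norming_graph0 gS); rewrite !addr0.
Qed.

Lemma norming_graph_chain (F : set (set (X * R))) :
  F `<=` (fun S => S = set0 \/ norming_graph S) -> total_on F subset ->
  (fun S => S = set0 \/ norming_graph S) (\bigcup_(S in F) S).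
Proof.
move=> FP Ftot.
have gF S p : F S -> S p -> norming_graph S.
  by move=> FS Sp; case: (FP S FS) => // S0; rewrite S0 in Sp.
have [[p [S FS Sp]]|nU] := pselect (exists p, (\bigcup_(S in F) S) p); last first.
  by left; apply/seteqP; split => // p Up; apply: nU; exists p.
right; split.
- by exists S => //; case: (gF _ _ FS Sp).
- move=> c x a y b [S1 F1 S1x] [S2 F2 S2y].
  have [_ l1 _ _] := gF _ _ F1 S1x; have [_ l2 _ _] := gF _ _ F2 S2y.
  case: (Ftot _ _ F1 F2) => sub.
  + by exists S2 => //; exact: l2 (sub _ S1x) S2y.
  + by exists S1 => //; exact: l1 S1x (sub _ S2y).
- move=> x a b [S1 F1 S1x] [S2 F2 S2y].
  have [_ _ f1 _] := gF _ _ F1 S1x; have [_ _ f2 _] := gF _ _ F2 S2y.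
  by case: (Ftot _ _ F1 F2) => sub; [exact: f2 (sub _ S1x) S2y|exact: f1 S1x (sub _ S2y)].
- by move=> x a [S1 F1 S1x]; have [_ _ _ d] := gF _ _ F1 S1x; exact: d.
Qed.

(* The one-dimensional extension step: a value c can be assigned to a new
   direction z compatibly with the norm bound, since
   a - |x - z| <= |y + z| - b for all (x, a), (y, b) in the graph. *)
Lemma extension_value A z : norming_graph A -> exists c : R,
  (forall x a, A (x, a) -> a - `|x - z| <= c) /\
  (forall y b, A (y, b) -> c <= `|y + z| - b).
Proof.
case=> Aw Alin _ Adom.
have key x a y b : A (x, a) -> A (y, b) -> a - `|x - z| <= `|y + z| - b.
  move=> Ax Ay; have := Adom _ _ (Alin 1 _ _ _ _ Ax Ay).
  rewrite scale1r mul1r => h.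
  have : `|x + y| <= `|x - z| + `|y + z|.
    by rewrite -[x + y]addr0 -(addNr z) addrACA; exact: ler_normD.
  lra.
pose E := [set r : R | exists x a, A (x, a) /\ r = a - `|x - z|].
have hasE : has_sup E.
  split; first by exists (`|w| - `|w - z|), w, `|w|.
  by exists (`|w + z| - `|w|); move=> r [x [a [Ax ->]]]; exact: key.
exists (sup E); split.
- by move=> x a Ax; apply: sup_upper_bound => //; exists x, a.
- move=> y b Ay; apply: ge_sup; first exact: hasE.1.
  by move=> r [x [a [Ax ->]]]; exact: key.
Qed.

Definition graph_extension (A : set (X * R)) (z : X) (c : R) : set (X * R) :=
  [set p | exists x a t, A (x, a) /\ p.1 = x + t *: z /\ p.2 = a + t * c].

(* The extended functional is still dominated by the norm: for t != 0 this is
   one of the two bounds on c applied at x / |t|. *)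
Lemma graph_extension_dominated A z c : norming_graph A ->
  (forall x a, A (x, a) -> a - `|x - z| <= c) ->
  (forall y b, A (y, b) -> c <= `|y + z| - b) ->
  norm_dominated (graph_extension A z c).
Proof.
move=> gA c_ge c_le _ _ [x [a [t [Ax [/= -> ->]]]]].
have [tlt|tgt|->] := ltgtP t 0.
- pose s := - t; have s0 : 0 < s by rewrite oppr_gt0.
  have := c_ge _ _ (norming_graphZ s^-1 gA Ax).
  have -> : s^-1 *: x - z = s^-1 *: (x + t *: z).
    by rewrite scalerDr scalerA /s invrN mulNr mulVf ?ltr0_neq0 // scaleN1r.
  rewrite normrZ gtr0_norm ?invr_gt0 // -mulrBr => h.
  rewrite -(ler_pM2l s0) mulrA mulfV ?gt_eqF // mul1r /s mulNr in h; lra.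
- have := c_le _ _ (norming_graphZ t^-1 gA Ax).
  have -> : t^-1 *: x + z = t^-1 *: (x + t *: z).
    by rewrite scalerDr scalerA mulVf ?gt_eqF // scale1r.
  rewrite normrZ gtr0_norm ?invr_gt0 // -mulrBr => h.
  rewrite -(ler_pM2l tgt) mulrA mulfV ?gt_eqF // mul1r in h; lra.
- by rewrite scale0r addr0 mul0r addr0; case: gA => _ _ _; apply.
Qed.

Lemma norming_graph_extend A z : norming_graph A -> ~ (exists a, A (z, a)) ->
  exists B, A `<` B /\ norming_graph B.
Proof.
move=> gA nz; have [c [c_ge c_le]] := extension_value z gA.
have [Aw Alin Afun _] := gA.
exists (graph_extension A z c); split.
  split; first by move=> [x a] Ax; exists x, a, 0; rewrite scale0r addr0 mul0r addr0.
  move=> BA; apply: nz; exists c; apply: BA; exists 0, 0, 1.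
  by rewrite scale1r add0r mul1r add0r; split => //; exact: norming_graph0.
split; last exact: graph_extension_dominated.
- by exists w, `|w|, 0; rewrite scale0r addr0 mul0r addr0.
- move=> k _ _ _ _ [x [a [t [Ax [/= -> ->]]]]] [y [b [s [Ay [/= -> ->]]]]].
  exists (k *: x + y), (k * a + b), (k * t + s); split; first exact: Alin.
  split => /=; last by ring.
  by rewrite scalerDr scalerA scalerDl addrACA.
- move=> p0 a0 b0 [x [a [t [Ax [/= ex ->]]]]] [y [b [s [Ay [/= ey ->]]]]].
  have [ts|ts] := eqVneq t s.
    rewrite ex -ts in ey; rewrite -ts -(addIr _ ey) in Ay *.
    by rewrite (Afun _ _ _ Ax Ay).
  exfalso; apply: nz; exists ((t - s)^-1 * (- a + b)).
  have -> : z = (t - s)^-1 *: (-1 *: x + y).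
    have -> : -1 *: x + y = (t - s) *: z.
      by rewrite scaleN1r scalerBl -[y](addrK (s *: z)) -ey ex addrA addKr.
    by rewrite scalerA mulVf ?subr_eq0 // scale1r.
  by apply: norming_graphZ => //; rewrite -[- a]mulN1r; exact: Alin.
Qed.

Definition line_graph : set (X * R) :=
  [set p | exists t, p.1 = t *: w /\ p.2 = t * `|w|].

Lemma line_graph_norming : w != 0 -> norming_graph line_graph.
Proof.
move=> w0; split.
- by exists 1; rewrite scale1r mul1r.
- move=> k _ _ _ _ [t [/= -> ->]] [s [/= -> ->]].
  by exists (k * t + s) => /=; rewrite scalerDl scalerA mulrDl mulrA.
- move=> p a b [t [/= e1 ->]] [s [/= e2 ->]].
  have : (t - s) *: w == 0 by rewrite scalerBl -e1 -e2 subrr.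
  by rewrite scaler_eq0 (negbTE w0) orbF subr_eq0 => /eqP ->.
- move=> _ _ [t [/= -> ->]]; rewrite normrZ.
  by apply: ler_wpM2r => //; exact: ler_norm.
Qed.

(* Hahn-Banach: a nonzero vector w is normed by a continuous linear functional,
   namely the one whose graph is a maximal norming graph (Zorn); its domain is
   all of X by the extension step, and |f x| <= |x| gives continuity. *)
Theorem hahn_banach_norming : w != 0 -> exists f : X -> R,
  [/\ (forall (a : R) (x y : X), f (a *: x + y) = a * f x + f y),
     continuous f & f w = `|w|].
Proof.
move=> w0.
have [A [PA maxA]] := Zorn_bigcup norming_graph_chain.
have gA : norming_graph A.
  case: PA => // A0; exfalso; apply: (maxA line_graph); last first.
    by right; exact: line_graph_norming.
  rewrite A0; split => // sub; have := sub (w, `|w|); apply.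
  by exists 1; rewrite scale1r mul1r.
have total_dom x : exists a, A (x, a).
  apply: contrapT => nx; have [B [AB gB]] := norming_graph_extend gA nx.
  by apply: (maxA B AB); right.
have [f Af] := choice total_dom.
have [Aw Alin Afun Adom] := gA.
have flin a x y : f (a *: x + y) = a * f x + f y.
  exact: Afun (Af _) (Alin a _ _ _ _ (Af x) (Af y)).
have fB x y : f (x - y) = f x - f y.
  by rewrite -scaleN1r addrC flin addrC mulN1r.
have fN x : f (- x) = - f x.
  by rewrite -sub0r fB (Afun _ _ _ (Af 0) (norming_graph0 gA)) sub0r.
have fbound x : `|f x| <= `|x|.
  rewrite ler_norml Adom ?Af // andbT lerNl -fN -[X in _ <= X]normrN.
  exact: Adom (Af _).
exists f; split => //; last exact: Afun (Af w) Aw.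
move=> x; apply/cvgrPdist_le => e e0.
have /cvgrPdist_le/(_ e e0) := @cvg_id _ (nbhs x).
by apply: filterS => y hy; rewrite -fB; exact: le_trans (fbound _) hy.
Qed.

End HahnBanach.

Section Dislocation.
Variables (R : realType) (X : completeNormedModType R).
Implicit Types (u v : nat -> X) (a b w : X).

Lemma lin_opD (g : X -> X) : lin_op g -> forall x y, g (x + y) = g x + g y.
Proof. by move=> glin x y; have := glin 1 x y; rewrite !scale1r. Qed.

Lemma lin_opB (g : X -> X) : lin_op g -> forall x y, g (x - y) = g x - g y.
Proof.
by move=> glin x y; have := glin (-1) y x; rewrite !scaleN1r ![- _ + _]addrC.
Qed.

Lemma weak_cvg_cst w : weak_cvg (fun _ => w) w.
Proof. by move=> f _; exact: cvg_cst. Qed.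

Lemma cvg_weak_cvg u w : u @ \oo --> w -> weak_cvg u w.
Proof. by move=> uw f [_ fcont]; exact: cvg_comp uw (fcont w). Qed.

Lemma weak_cvgD u v a b :
  weak_cvg u a -> weak_cvg v b -> weak_cvg (fun n => u n + v n) (a + b).
Proof.
move=> ua vb f cf; have [flin _] := cf.
have fD x y : f (x + y) = f x + f y by have := flin 1 x y; rewrite scale1r mul1r.
rewrite fD; under eq_fun do rewrite fD; exact: cvgD (ua f cf) (vb f cf).
Qed.

Lemma weak_cvg_subseq u w phi : subseq_idx phi -> weak_cvg u w ->
  weak_cvg (fun j => u (phi j)) w.
Proof.
move=> phiI uw f cf; apply: cvg_comp (uw f cf).
have phi_ge n : (n <= phi n)%N.
  by elim: n => // n IH; exact: leq_ltn_trans IH (phiI _ _ _).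
apply/cvgnyPge => N; near=> n; apply: (@le_trans _ _ n); last exact: phi_ge.
by near: n; exact: nbhs_infty_ge.
Unshelve. all: end_near. Qed.

(* Weak limits are unique: continuous functionals separate points
   (Hahn-Banach applied to a - b). *)
Lemma weak_limit_unique u a b : weak_cvg u a -> weak_cvg u b -> a = b.
Proof.
move=> ua ub; apply/eqP; rewrite -subr_eq0; apply: contraT => ab0.
have [f [flin fcont fab]] := hahn_banach_norming ab0.
have cf : cont_lin_functional f by [].
have fB x y : f (x - y) = f x - f y.
  by have := flin (-1) y x; rewrite scaleN1r mulN1r ![- _ + _]addrC.
have fa_fb : f a = f b by exact: cvg_unique _ (ua f cf) (ub f cf).
have fab0 : f (a - b) = 0 by rewrite fB fa_fb subrr.
by move: fab0; rewrite fab => /eqP; rewrite normr_eq0 (negPf ab0).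
Qed.

(* If the maps K n converge operator-strongly while their inverses
   Ki n are linear isometries converging operator-weakly to 0, then X = {0}:
   every y equals Ki n (A y) + Ki n (K n y - A y), where the first term tends
   weakly and the second in norm to 0. *)
Lemma inverse_weak0_trivial (K Ki : nat -> X -> X) (A : X -> X) :
  (forall n, lin_op (Ki n)) -> (forall n x, `|Ki n x| = `|x|) ->
  (forall n y, Ki n (K n y) = y) ->
  op_strong_cvg K A -> op_weak_cvg Ki (fun _ => 0) -> forall y : X, y = 0.
Proof.
move=> Kilin Kiiso KiK KA Ki0 y.
have split_y n : y = Ki n (A y) + Ki n (K n y - A y).
  by rewrite -lin_opD // addrC subrK KiK.
have rest0 : (fun n => Ki n (K n y - A y)) @ \oo --> (0 : X).
  apply/norm_cvg0P; under eq_fun do rewrite Kiiso.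
  by apply/norm_cvg0P/subr_cvg0; exact: KA.
have := weak_cvgD (Ki0 (A y)) (cvg_weak_cvg rest0).
rewrite addr0 -(funext split_y); exact: weak_limit_unique (weak_cvg_cst (w := y)).
Qed.

End Dislocation.

Theorem mainTheorem5 (R : realType) (X : completeNormedModType R)
  (G : set (X -> X)) (u : nat -> X)
  (g1 g2 h1 h2 : nat -> X -> X) (w1 w2 : X) :
  dislocation_space G -> reflexive_space X ->
  (exists M : R, forall n, `|u n| <= M) ->
  (forall n, g1 n \in G) -> (forall n, g2 n \in G) ->
  (forall n, cancel (g1 n) (h1 n) /\ cancel (h1 n) (g1 n)) ->
  (forall n, cancel (g2 n) (h2 n) /\ cancel (h2 n) (g2 n)) ->
  weak_cvg (fun n => h1 n (u n)) w1 ->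
  weak_cvg (fun n => h2 n (u n - g1 n w1)) w2 ->
  w2 != 0 ->
  op_weak_cvg (fun n => h1 n \o g2 n) (fun _ => 0).
Proof.
move=> [[_ Giso Gcomp Ginv] D1 D2] _ _ g1G g2G c1 c2 wu1 wu2 w20.
pose K n := h1 n \o g2 n; pose Ki n := h2 n \o g1 n.
have KG n : K n \in G by apply: Gcomp => //; apply: (Ginv (g1 n)); case: (c1 n).
have KiG n : Ki n \in G by apply: Gcomp => //; apply: (Ginv (g2 n)); case: (c2 n).
have KiK n y : Ki n (K n y) = y by rewrite /Ki /K /= (c1 n).2 (c2 n).1.
have Kilin n : lin_op (Ki n) by case: (Giso _ (KiG n)).
have Kiiso n x : `|Ki n x| = `|x| by case: (Giso _ (KiG n)).
apply: contrapT => nK.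
have [phi [phiI [A [_ KA]]]] := D1 _ KG nK.
have nKi : ~ op_weak_cvg (fun j => Ki (phi j)) (fun _ => 0).
  move=> Ki0; apply: nK => v.
  have X0 := inverse_weak0_trivial (fun j => Kilin (phi j))
    (fun j => Kiiso (phi j)) (fun j => KiK (phi j)) KA Ki0.
  by rewrite (funext (fun n => X0 (K n v))); exact: weak_cvg_cst.
have h1u_w1 : weak_cvg (fun n => h1 n (u n) - w1) 0.
  by rewrite -(subrr w1); exact: weak_cvgD wu1 (weak_cvg_cst (w := - w1)).
have [psi [psiI Ki_h1u]] :=
  D2 _ _ (fun j => KiG (phi j)) nKi (weak_cvg_subseq phiI h1u_w1).
have Ki_h1uE n : Ki n (h1 n (u n) - w1) = h2 n (u n - g1 n w1).
  by have [g1lin _ _] := Giso _ (g1G n); rewrite /Ki /= lin_opB // (c1 n).2.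
have w2_0 : w2 = 0.
  apply: weak_limit_unique (weak_cvg_subseq psiI (weak_cvg_subseq phiI wu2)) _.
  by under eq_fun do rewrite -Ki_h1uE.
by rewrite w2_0 eqxx in w20.
Qed.
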